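(* Let $n\ge1$. The coefficient of $x^{n-1}$ in the expansion of \[\frac{G(x)-H(x)}{x^2}\,(1+a(x)x^2)\] has the form $u\big(a_{n-1}+S_0(n)+S_1(n)v+S_2(n)v^2+\cdots+S_n(n)v^n\big)$, where $u=2j-1$, $v=j(j-1)$, and each $S_i(n)$ is a polynomial in $a_0,a_1,\dots,a_{n-2}$ with rational coefficients which is independent of $j$. In particular, $S_0(1)=0$ and $S_1(1)=\tfrac16$.
   Context: $j$ is a positive integer; $a_0,a_1,\dots$ are indeterminates and $a(x)=\sum_{i\ge0}a_ix^i$ (formal power series in $x$). Set $G(x)=\prod_{i=0}^{j-1}\frac{1+a(x)x^2}{1+ix}$ and $H(x)=\prod_{i=1-j}^{-1}\frac{1+ix}{1+a(x)x^2}$ (so $G(x)=1+a(x)x^2$ and $H(x)=1$ when $j=1$), viewed as formal power series in $x$. *)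

From HB Require Import structures.
From mathcomp Require Import all_boot all_algebra.
From mathcomp Require Import mpoly.
Set Implicit Arguments. Unset Strict Implicit. Unset Printing Implicit Defensive.
Import GRing.Theory.
Local Open Scope ring_scope.

(* Formal power series in x over a commutative ring with units R,
   represented by their coefficient sequence: f n = coefficient of x^n. *)
Section FPS.
Variable R : comUnitRingType.

Definition fps := nat -> R.

Definition fps_const (c : R) : fps := fun n => if n == 0%N then c else 0.
Definition fps_X : fps := fun n => (n == 1%N)%:R.
Definition fps_add (f g : fps) : fps := fun n => f n + g n.
Definition fps_sub (f g : fps) : fps := fun n => f n - g n.
Definition fps_mul (f g : fps) : fps :=
  fun n => \sum_(i < n.+1) f i * g (n - i)%N.
(* f / x^k (exact when the first k coefficients of f vanish) *)
Definition fps_divX (k : nat) (f : fps) : fps := fun n => f (n + k)%N.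

(* Multiplicative inverse of a power series with invertible constant term,
   by the standard recursion b_0 = f_0^-1,
   b_n = - f_0^-1 * sum_{i=1}^n f_i b_{n-i}.
   fps_inv_seq f n = [:: b_0; ...; b_n]. *)
Fixpoint fps_inv_seq (f : fps) (n : nat) : seq R :=
  match n with
  | 0%N => [:: (f 0%N)^-1]
  | m.+1 => let s := fps_inv_seq f m in
            rcons s (- (f 0%N)^-1 * \sum_(k < m.+1) f k.+1 * nth 0 s (m - k)%N)
  end.
Definition fps_inv (f : fps) : fps := fun n => nth 0 (fps_inv_seq f n) n.

Definition one_ax2 (a : fps) : fps :=
  fps_add (fps_const 1) (fps_mul a (fps_mul fps_X fps_X)).
Definition one_cx (c : R) : fps := fps_add (fps_const 1) (fps_mul (fps_const c) fps_X).

Definition Gser (a : fps) (j : nat) : fps :=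
  \big[fps_mul/fps_const 1]_(0 <= i < j) fps_mul (one_ax2 a) (fps_inv (one_cx i%:R)).
(* H(x) = prod_{i=1-j}^{-1} (1 + i x) / (1 + a(x) x^2)
        = prod_{k=1}^{j-1} (1 - k x) / (1 + a(x) x^2)   (i = -k) *)
Definition Hser (a : fps) (j : nat) : fps :=
  \big[fps_mul/fps_const 1]_(1 <= k < j) fps_mul (one_cx (- k%:R)) (fps_inv (one_ax2 a)).

Definition lemma_series (a : fps) (j : nat) : fps :=
  fps_mul (fps_divX 2 (fps_sub (Gser a j) (Hser a j))) (one_ax2 a).

End FPS.

From HB Require Import structures.
From mathcomp Require Import all_boot all_algebra.
From mathcomp Require Import mpoly.
Import GRing.Theory.
Local Open Scope ring_scope.

From mathcomp Require Import ring zify.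
From Stdlib Require Import FunctionalExtensionality.
Set Implicit Arguments. Unset Strict Implicit. Unset Printing Implicit Defensive.

(* Write A = 1 + a(x) x^2 and, for every integer m, F_m = G_m A if m >= 0 and
   F_m = H_(1-m) A if m <= 0, where G_m and H_m are the products G and H taken
   with j = m.  Then (1 + m x) F_(m+1) = A F_m for all m, the series of the
   statement is (F_j - F_(1-j)) / x^2, and the recurrence shows that the
   coefficient of x^N in F_m is a polynomial in m of degree at most 2N.  Hence
   h(m) = [x^(n+1)] (F_m - F_(1-m)) is a polynomial of degree at most 2n + 2 with
   h(1 - m) = - h(m), so h(m) = (2m - 1) Q(m (m - 1)) with deg Q <= n, and Q is
   obtained by Lagrange interpolation at m = 1, ..., n + 1.  Only a_0, ..., a_(n-1)
   enter h, and a_(n-1) only through the term (2m - 1) a_(n-1); computing with the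
   generic coefficients a_i = X_i makes the S_i universal polynomials. *)

Lemma coefM_congr (R : nzRingType) (p q p' q' : {poly R}) n :
  (forall i, (i <= n)%N -> p`_i = p'`_i) ->
  (forall i, (i <= n)%N -> q`_i = q'`_i) -> (p * q)`_n = (p' * q')`_n.
Proof.
move=> eq_p eq_q; rewrite !coefM; apply: eq_bigr => i _.
by rewrite eq_p ?eq_q // ?leq_subr // -ltnS.
Qed.

Section PowerSeries.
Variable R : comUnitRingType.
Implicit Types (f g h : fps R) (c : R).

Definition fps_trunc (N : nat) f : {poly R} := \poly_(i < N.+1) f i.

Lemma coef_fps_trunc N f i : (i <= N)%N -> (fps_trunc N f)`_i = f i.
Proof. by move=> le; rewrite coef_poly ltnS le. Qed.

Lemma fps_mul_truncE N f g n : (n <= N)%N ->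
  fps_mul f g n = (fps_trunc N f * fps_trunc N g)`_n.
Proof.
move=> le; rewrite coefM; apply: eq_bigr => i _.
have le_i : (i <= N)%N by rewrite -ltnS (leq_trans (ltn_ord i)).
by rewrite !coef_fps_trunc // (leq_trans (leq_subr _ _)).
Qed.

Lemma fps_mulC f g : fps_mul f g = fps_mul g f.
Proof.
by apply: functional_extensionality => n; rewrite !(fps_mul_truncE _ _ (leqnn n)) mulrC.
Qed.

Lemma fps_mulA f g h : fps_mul f (fps_mul g h) = fps_mul (fps_mul f g) h.
Proof.
apply: functional_extensionality => n; rewrite !(fps_mul_truncE _ _ (leqnn n)).
have trunc_mulE f1 f2 i : (i <= n)%N ->
    (fps_trunc n (fps_mul f1 f2))`_i = (fps_trunc n f1 * fps_trunc n f2)`_i.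
  by move=> le; rewrite coef_fps_trunc // (fps_mul_truncE _ _ le).
transitivity ((fps_trunc n f * (fps_trunc n g * fps_trunc n h))`_n).
  by apply: coefM_congr => // i /trunc_mulE.
by rewrite mulrA; apply: coefM_congr => // i /trunc_mulE.
Qed.

Lemma fps_mul1 f : fps_mul (fps_const 1) f = f.
Proof.
apply: functional_extensionality => n.
rewrite /fps_mul big_ord_recl /fps_const eqxx mul1r subn0 big1 ?addr0 // => i _.
by rewrite mul0r.
Qed.

HB.instance Definition _ :=
  Monoid.isComLaw.Build (fps R) (fps_const 1) (@fps_mul R) fps_mulA fps_mulC fps_mul1.

Lemma fps_mulCA f g h : fps_mul f (fps_mul g h) = fps_mul g (fps_mul f h).
Proof. by rewrite !fps_mulA (fps_mulC f g). Qed.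

Lemma fps_mulDl f g h : fps_mul (fps_add f g) h = fps_add (fps_mul f h) (fps_mul g h).
Proof.
apply: functional_extensionality => n.
by rewrite /fps_mul /fps_add -big_split; apply: eq_bigr => i _; rewrite mulrDl.
Qed.

Lemma fps_mulBl f g h : fps_mul (fps_sub f g) h = fps_sub (fps_mul f h) (fps_mul g h).
Proof.
apply: functional_extensionality => n.
by rewrite /fps_mul /fps_sub -sumrB; apply: eq_bigr => i _; rewrite mulrBl.
Qed.

Lemma fps_coefCM c f n : fps_mul (fps_const c) f n = c * f n.
Proof.
rewrite /fps_mul big_ord_recl /fps_const eqxx subn0 big1 ?addr0 // => i _.
by rewrite mul0r.
Qed.

Lemma fps_coefXM f n : fps_mul (fps_X R) f n = if n is n'.+1 then f n' else 0.
Proof.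
rewrite /fps_mul big_ord_recl {1}/fps_X mul0r add0r.
case: n => [|n]; first by rewrite big_ord0.
rewrite big_ord_recl /fps_X /= mul1r subSS subn0 big1 ?addr0 // => i _.
by rewrite mul0r.
Qed.

Lemma size_fps_inv_seq f n : size (fps_inv_seq f n) = n.+1.
Proof. by elim: n => [|n IH] //=; rewrite size_rcons IH. Qed.

Lemma nth_fps_inv_seq f n k : (k <= n)%N -> nth 0 (fps_inv_seq f n) k = fps_inv f k.
Proof.
elim: n => [|n IH]; first by rewrite leqn0 => /eqP->.
rewrite leq_eqVlt => /orP[/eqP-> //|lt_kn].
by rewrite /= nth_rcons size_fps_inv_seq lt_kn IH.
Qed.

Lemma fps_invS f n :
  fps_inv f n.+1 = - (f 0%N)^-1 * \sum_(k < n.+1) f k.+1 * fps_inv f (n - k)%N.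
Proof.
rewrite /fps_inv /= nth_rcons size_fps_inv_seq ltnn eqxx.
by congr (_ * _); apply: eq_bigr => k _; rewrite nth_fps_inv_seq ?leq_subr.
Qed.

Lemma fps_mulV f : f 0%N \is a GRing.unit -> fps_mul f (fps_inv f) = fps_const 1.
Proof.
move=> f0_unit; apply: functional_extensionality => -[|n].
  by rewrite /fps_mul big_ord1 /fps_inv /= mulrV.
rewrite /fps_mul big_ord_recl /= subn0 fps_invS mulrA mulrN mulrV // mulN1r.
rewrite /fps_const addrC; apply/eqP; rewrite subr_eq0; apply/eqP.
by apply: eq_bigr => i _; rewrite /bump add1n subSS.
Qed.

Lemma one_cx_coefM c g n :
  fps_mul (one_cx c) g n = g n + c * (if n is n'.+1 then g n' else 0).
Proof. by rewrite /one_cx fps_mulDl /fps_add fps_mul1 -fps_mulA fps_coefCM fps_coefXM. Qed.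

Lemma one_cx_mulV c : fps_mul (one_cx c) (fps_inv (one_cx c)) = fps_const 1.
Proof. by rewrite fps_mulV // /one_cx /fps_add fps_coefCM /fps_X mulr0 addr0 unitr1. Qed.

Lemma one_ax2E (a : fps R) n :
  one_ax2 a n = (n == 0%N)%:R + (if n is n'.+2 then a n' else 0).
Proof.
rewrite /one_ax2 /fps_add fps_mulC -fps_mulA fps_coefXM /fps_const.
by case: n => [|[|n]] //=; rewrite ?fps_coefXM ?addr0 ?add0r.
Qed.

Lemma one_ax2_coef0 (a : fps R) : one_ax2 a 0%N = 1.
Proof. by rewrite one_ax2E addr0. Qed.

Lemma one_ax2_mulV (a : fps R) : fps_mul (one_ax2 a) (fps_inv (one_ax2 a)) = fps_const 1.
Proof. by rewrite fps_mulV // one_ax2_coef0 unitr1. Qed.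

End PowerSeries.

Section FiniteDifferences.
Variable T : comPzRingType.
Implicit Types (f g : int -> T) (c : T).

Definition Delta f : int -> T := fun m => f (m + 1) - f m.

(* [polyfun d f]: f is a polynomial function of degree < d. *)
Definition polyfun (d : nat) f := forall m, iter d Delta f m = 0.

Lemma Delta_eq0_const f : (forall m, Delta f m = 0) -> forall m, f m = f 0.
Proof.
move=> Df0; elim/int_rec => [//|k IH|k IH].
  by rewrite -addn1 PoszD (subr0_eq (Df0 k)).
rewrite -IH -(subr0_eq (Df0 (- k.+1%:Z))); congr f.
by rewrite -addn1 PoszD opprD addrNK.
Qed.

Lemma eq_Delta f g : (forall m, Delta f m = Delta g m) -> f 0 = g 0 -> f =1 g.
Proof.
move=> eqD eq0 m; apply/eqP; rewrite -subr_eq0; apply/eqP.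
rewrite (@Delta_eq0_const (fun m => f m - g m)) ?eq0 ?subrr // => k.
by move: (eqD k); rewrite /Delta => /eqP; rewrite subr_eq => /eqP ->; ring.
Qed.

Lemma eq_polyfun d f g : f =1 g -> polyfun d f -> polyfun d g.
Proof. by move=> /functional_extensionality ->. Qed.

Lemma iter_Delta_lin d c1 c2 f g : iter d Delta (fun m => c1 * f m + c2 * g m) =
  fun m => c1 * iter d Delta f m + c2 * iter d Delta g m.
Proof.
elim: d => [|d IH] //=; rewrite IH; apply: functional_extensionality => m.
rewrite /Delta; ring.
Qed.

Lemma iter_Delta_shift d k f :
  iter d Delta (fun m => f (m + k)) = fun m => iter d Delta f (m + k).
Proof.
elim: d => [|d IH] //=; rewrite IH; apply: functional_extensionality => m.
by rewrite /Delta addrAC.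
Qed.

Lemma iter_Delta_reflect d k f : iter d Delta (fun m => f (k - m)) =
  fun m => (-1) ^+ d * iter d Delta f (k - m - d%:Z).
Proof.
elim: d => [|d IH] /=.
  by apply: functional_extensionality => m; rewrite subr0 mul1r.
rewrite IH; apply: functional_extensionality => m; rewrite /Delta.
have -> : k - (m + 1) - d%:Z = k - m - d.+1%:Z by rewrite -addn1 PoszD; ring.
have -> : k - m - d%:Z = k - m - d.+1%:Z + 1 by rewrite -addn1 PoszD; ring.
rewrite exprS; ring.
Qed.

Lemma polyfun_lin d c1 c2 f g :
  polyfun d f -> polyfun d g -> polyfun d (fun m => c1 * f m + c2 * g m).
Proof. by move=> pf pg m; rewrite iter_Delta_lin pf pg !mulr0 addr0. Qed.

Lemma polyfunD d f g : polyfun d f -> polyfun d g -> polyfun d (fun m => f m + g m).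
Proof. by move=> pf pg; apply: eq_polyfun (polyfun_lin 1 1 pf pg) => m; rewrite !mul1r. Qed.

Lemma polyfunB d f g : polyfun d f -> polyfun d g -> polyfun d (fun m => f m - g m).
Proof. by move=> pf pg; apply: eq_polyfun (polyfun_lin 1 (-1) pf pg) => m; ring. Qed.

Lemma polyfunMl d c f : polyfun d f -> polyfun d (fun m => c * f m).
Proof. by move=> pf; apply: eq_polyfun (polyfun_lin c 0 pf pf) => m; ring. Qed.

Lemma polyfun_shift d k f : polyfun d f -> polyfun d (fun m => f (m + k)).
Proof. by move=> pf m; rewrite iter_Delta_shift pf. Qed.

Lemma polyfun_reflect d k f : polyfun d f -> polyfun d (fun m => f (k - m)).
Proof. by move=> pf m; rewrite iter_Delta_reflect pf mulr0. Qed.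

Lemma polyfunS d f : polyfun d (Delta f) -> polyfun d.+1 f.
Proof. by move=> pf m; rewrite iterSr. Qed.

Lemma polyfun_Delta d f : polyfun d.+1 f -> polyfun d (Delta f).
Proof. by move=> pf m; rewrite -iterSr. Qed.

Lemma polyfun0 d : polyfun d (fun _ => 0).
Proof.
have Delta0 : Delta (fun _ => 0) = fun _ => 0.
  by apply: functional_extensionality => m; rewrite /Delta subrr.
by elim: d => [//|d IH] m; rewrite iterSr Delta0.
Qed.

Lemma polyfun_leq d d' f : (d <= d')%N -> polyfun d f -> polyfun d' f.
Proof.
move=> le_dd' pf m; rewrite -(subnK le_dd') iterD.
by rewrite (functional_extensionality _ _ pf) polyfun0.
Qed.

Lemma polyfun_const c : polyfun 1 (fun _ => c).
Proof. by move=> m; rewrite /= /Delta subrr. Qed.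

Lemma polyfun_mulid d f : polyfun d f -> polyfun d.+1 (fun m => m%:~R * f m).
Proof.
elim: d f => [|d IH] f pf.
  by move=> m; rewrite /= /Delta !(pf : forall m, f m = 0) !mulr0 subrr.
apply: polyfunS; apply: eq_polyfun (polyfunD (IH _ (polyfun_Delta pf)) (polyfun_shift 1 pf)).
by move=> m; rewrite /Delta intrD; ring.
Qed.

Lemma polyfun_sum (I : Type) (r : seq I) (P : pred I) (F : I -> int -> T) d :
  (forall i, P i -> polyfun d (F i)) -> polyfun d (fun m => \sum_(i <- r | P i) F i m).
Proof.
move=> pF; elim: r => [|i r IH].
  by apply: eq_polyfun (polyfun0 d) => m; rewrite big_nil.
case Pi: (P i); last by apply: eq_polyfun IH => m; rewrite big_cons Pi.
by apply: eq_polyfun (polyfunD (pF i Pi) IH) => m; rewrite big_cons Pi.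
Qed.

Lemma polyfun_eq0 d f m0 : polyfun d f ->
  (forall i, (i < d)%N -> f (m0 + i%:Z) = 0) -> forall m, f m = 0.
Proof.
elim: d f m0 => [|d IH] f m0 pf f0; first exact: pf.
have Df0 : forall m, Delta f m = 0.
  apply: (IH _ m0 (polyfun_Delta pf)) => i lt_id.
  by rewrite /Delta -addrA -PoszD addn1 !f0 ?subrr // ltnW.
move=> m; have fc := Delta_eq0_const Df0.
by rewrite fc -(fc m0) -[m0]addr0 f0.
Qed.

End FiniteDifferences.

Arguments Delta {T} f.

Section ShiftRecurrence.
Variable T : comPzRingType.

(* Coefficientwise form of (1 + m x) F_(m+1)(x) = A(x) F_m(x). *)
Definition shift_rec (A : nat -> T) (F : int -> nat -> T) := forall m N,
  F (m + 1) N + m%:~R * (if N is N'.+1 then F (m + 1) N' else 0) =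
  \sum_(k < N.+1) A k * F m (N - k)%N.

Lemma shift_rec_Delta A F : A 0%N = 1 -> shift_rec A F -> forall m N,
  Delta (F^~ N) m = \sum_(k < N) A k.+1 * F m (N - k.+1)%N
                    - m%:~R * (if N is N'.+1 then F (m + 1) N' else 0).
Proof.
move=> A0 recF m N; move: (recF m N); rewrite big_ord_recl /= A0 mul1r subn0 /Delta.
under eq_bigr do rewrite /bump add1n.
by move=> /(canRL (addrK _)) ->; rewrite addrAC [F m N + _]addrC addrK.
Qed.

Lemma shift_rec_coef0 A F : A 0%N = 1 -> shift_rec A F -> F 0 0%N = 1 ->
  forall m, F m 0%N = 1.
Proof.
move=> A0 recF F00 m; rewrite -F00; apply: (@Delta_eq0_const _ (F^~ 0%N)) => k.
by rewrite (shift_rec_Delta A0 recF) big_ord0 mulr0 subrr.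
Qed.

Lemma shift_rec_polyfun A F : A 0%N = 1 -> shift_rec A F ->
  forall N, polyfun (N.*2).+1 (F^~ N).
Proof.
move=> A0 recF; elim/ltn_ind => N IH; apply: polyfunS.
apply: (eq_polyfun (fun m => esym (shift_rec_Delta A0 recF m N))).
apply: polyfunB.
  apply: polyfun_sum => k _; apply: polyfunMl.
  have lt_N : (N - k.+1 < N)%N by rewrite ltn_subrL /= (leq_ltn_trans _ (ltn_ord k)).
  by apply: polyfun_leq (IH _ lt_N); rewrite ltn_double.
case: N IH => [|N] IH; first by apply: eq_polyfun (polyfun0 _ _) => m; rewrite mulr0.
by rewrite doubleS; apply/polyfun_mulid/(polyfun_shift 1 (IH N _)).
Qed.

Lemma shift_rec_coef_eq A A' F F' K :
  A 0%N = 1 -> (forall k, (k < K)%N -> A k = A' k) ->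
  shift_rec A F -> shift_rec A' F' -> (forall N, F 0 N = A N) -> (forall N, F' 0 N = A' N) ->
  forall N m, (N < K)%N -> F m N = F' m N.
Proof.
move=> A0 eqA recF recF' F0 F0'; elim/ltn_ind => N IH m lt_NK.
have A0' : A' 0%N = 1 by rewrite -eqA // (leq_ltn_trans _ lt_NK).
apply: (eq_Delta (f := F^~ N) (g := F'^~ N)) => [k|]; last by rewrite F0 F0' eqA.
rewrite (shift_rec_Delta A0 recF) (shift_rec_Delta A0' recF'); congr (_ - _).
  apply: eq_bigr => l _; have lt_lN := ltn_ord l.
  have lt_N : (N - l.+1 < N)%N by rewrite ltn_subrL (leq_ltn_trans _ lt_lN).
  have lt_K : (N - l.+1 < K)%N by rewrite (leq_ltn_trans (leq_subr _ _) lt_NK).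
  by rewrite eqA ?IH // (leq_ltn_trans lt_lN lt_NK).
by case: N IH lt_NK => [|N] IH lt_NK //; rewrite IH // ltnW.
Qed.

Lemma shift_rec_coef_perturb A A' F F' K (d : T) :
  A 0%N = 1 -> (0 < K)%N -> (forall k, (k < K)%N -> A k = A' k) -> A K = A' K + d ->
  shift_rec A F -> shift_rec A' F' -> (forall N, F 0 N = A N) -> (forall N, F' 0 N = A' N) ->
  forall m, F m K = F' m K + d * (m + 1)%:~R.
Proof.
move=> A0 K_gt0 eqA AK recF recF' F0 F0'.
have A0' : A' 0%N = 1 by rewrite -eqA.
have eqF := shift_rec_coef_eq A0 eqA recF recF' F0 F0'.
have F_0 := shift_rec_coef0 A0 recF (etrans (F0 0%N) A0).
have F'_0 := shift_rec_coef0 A0' recF' (etrans (F0' 0%N) A0').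
apply: (eq_Delta (f := F^~ K) (g := fun m => F' m K + d * (m + 1)%:~R)) => [m|];
  last by rewrite F0 F0' AK add0r mulr1.
rewrite (shift_rec_Delta A0 recF).
have -> : Delta (fun m => F' m K + d * (m + 1)%:~R) m = Delta (F'^~ K) m + d.
  by rewrite /Delta !intrD; ring.
rewrite (shift_rec_Delta A0' recF'); case: K K_gt0 eqA AK eqF => [|K] // _ eqA AK eqF.
rewrite !big_ord_recr /= subnn F_0 F'_0 AK eqF //.
have -> : \sum_(l < K) A l.+1 * F m (K.+1 - l.+1)%N =
          \sum_(l < K) A' l.+1 * F' m (K.+1 - l.+1)%N.
  apply: eq_bigr => l _.
  have lt_K : (K.+1 - l.+1 < K.+1)%N by rewrite subSS ltnS leq_subr.
  by rewrite eqA ?eqF // ltnS ltn_ord.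
ring.
Qed.

End ShiftRecurrence.

Section Fseries.
Variables (R : comUnitRingType) (a : fps R).
Local Notation A := (one_ax2 a).

(* [Negz k] is -(k + 1), so the second branch is H_(1-m) A. *)
Definition Fser (m : int) : fps R :=
  match m with
  | Posz k => fps_mul (Gser a k) A
  | Negz k => fps_mul (Hser a k.+2) A
  end.

Definition Fodd (N : nat) (m : int) : R := Fser m N - Fser (1 - m) N.

Lemma Gser0 : Gser a 0 = fps_const 1.
Proof. by rewrite /Gser big_geq. Qed.

Lemma GserS k : Gser a k.+1 = fps_mul (Gser a k) (fps_mul A (fps_inv (one_cx k%:R))).
Proof. by rewrite /Gser big_nat_recr. Qed.

Lemma Hser1 : Hser a 1 = fps_const 1.
Proof. by rewrite /Hser big_geq. Qed.

Lemma HserS k :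
  Hser a k.+2 = fps_mul (Hser a k.+1) (fps_mul (one_cx (- k.+1%:R)) (fps_inv A)).
Proof. by rewrite /Hser big_nat_recr. Qed.

Lemma FserN k : Fser (- k%:Z) = fps_mul (Hser a k.+1) A.
Proof. by case: k => [|k]; rewrite /= ?Gser0 ?Hser1 // -NegzE. Qed.

Lemma Fser0 N : Fser 0 N = A N.
Proof. by rewrite /= Gser0 fps_mul1. Qed.

Lemma Fser_recE m : fps_mul (one_cx m%:~R) (Fser (m + 1)) = fps_mul A (Fser m).
Proof.
case: m => k.
  rewrite -PoszD addn1 /= GserS; set c := one_cx _.
  by rewrite -!fps_mulA (fps_mulCA c) (fps_mulCA c) (fps_mulA c) one_cx_mulV fps_mul1 fps_mulCA.
rewrite NegzE (_ : - k.+1%:Z + 1 = - k%:Z); last by rewrite -addn1 PoszD opprD addrNK.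
rewrite !FserN HserS mulrNz; set c := one_cx _.
by rewrite -!fps_mulA (fps_mulCA A) (fps_mulCA A) (fps_mulA A) one_ax2_mulV fps_mul1 fps_mulCA.
Qed.

Lemma Fser_rec : shift_rec A Fser.
Proof. by move=> m N; rewrite -one_cx_coefM Fser_recE. Qed.

Lemma Fser_coef0 m : Fser m 0%N = 1.
Proof.
have A0 := one_ax2_coef0 a.
exact: (shift_rec_coef0 A0 Fser_rec (etrans (Fser0 0) A0)).
Qed.

Lemma Fser_coef1S m : Fser (m + 1) 1%N = Fser m 1%N - m%:~R.
Proof.
move: (Fser_rec m 1%N); rewrite !big_ord_recr big_ord0 /= add0r one_ax2_coef0 one_ax2E /=.
by rewrite Fser_coef0 mulr1 subn0 addr0 mul0r addr0 mul1r => /(canRL (addrK _)).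
Qed.

Lemma Fser_coef1_sym m : Fser m 1%N = Fser (1 - m) 1%N.
Proof.
apply: (eq_Delta (f := Fser^~ 1%N) (g := fun m => Fser (1 - m) 1%N)) => [k|]; rewrite /Delta.
  rewrite Fser_coef1S (_ : 1 - k = 1 - (k + 1) + 1) ?Fser_coef1S; last by ring.
  by rewrite (_ : 1 - (k + 1) = - k) ?intrN; ring.
by rewrite subr0 -[1]add0r Fser_coef1S subr0.
Qed.

Lemma Fodd_reflect N m : Fodd N (1 - m) = - Fodd N m.
Proof. by rewrite /Fodd subKr opprB. Qed.

Lemma polyfun_Fodd N : polyfun (N.*2).+1 (Fodd N).
Proof.
have pF := shift_rec_polyfun (one_ax2_coef0 a) Fser_rec N.
exact: polyfunB pF (polyfun_reflect 1 pF).
Qed.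

Lemma Fodd2 : Fodd 2 1 = a 0%N /\ Fodd 2 2 = 3%:R * a 0%N + 1.
Proof.
have rec2 m : Fser (m + 1) 2 + m%:~R * Fser (m + 1) 1%N = Fser m 2 + a 0%N.
  move: (Fser_rec m 2); rewrite !big_ord_recr big_ord0 /= add0r one_ax2_coef0 !one_ax2E /=.
  by rewrite !Fser_coef0 => ->; ring.
have F01 : Fser 0 1%N = 0 by rewrite Fser0 one_ax2E /= addr0.
have F11 : Fser 1 1%N = 0 by rewrite -[1]add0r Fser_coef1S F01 subr0.
have F21 : Fser (1 + 1) 1%N = -1 by rewrite Fser_coef1S F11 sub0r.
have F0 := rec2 0; rewrite add0r mul0r addr0 in F0.
have F1 := rec2 1; rewrite F21 mulrN1 in F1.
have Fm1 := rec2 (-1); rewrite addNr F01 mulr0 addr0 in Fm1.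
rewrite /Fodd subrr mulr2n opprD addrA subrr add0r; split; first by rewrite F0; ring.
rewrite -[Fser (1 + 1) 2](addrK (-1)) F1 -[Fser (-1) 2](addrK (a 0%N)) -Fm1 F0; ring.
Qed.

Lemma lemma_seriesE n j : lemma_series a j.+1 n = Fodd n.+2 j.+1.
Proof.
set D := fps_sub (Gser a j.+1) (Hser a j.+1).
have DA : fps_mul D A = fun N => Fodd N j.+1.
  rewrite /D fps_mulBl /Fodd /fps_sub (_ : 1 - j.+1%:Z = - j%:Z) ?FserN //.
  by rewrite -addn1 PoszD; ring.
have D0 : D 0%N = 0.
  move: (congr1 (@^~ 0%N) DA); rewrite /fps_mul big_ord1 one_ax2_coef0 mulr1 /Fodd.
  by rewrite !Fser_coef0 subrr.
have D1 : D 1%N = 0.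
  move: (congr1 (@^~ 1%N) DA); rewrite /fps_mul !big_ord_recr big_ord0 /= D0 mul0r !add0r.
  by rewrite one_ax2_coef0 mulr1 /Fodd Fser_coef1_sym subrr.
rewrite -(congr1 (@^~ n.+2) DA) /lemma_series /fps_mul /fps_divX [in RHS]big_ord_recl.
rewrite [in RHS]big_ord_recl /= D0 D1 !mul0r !add0r.
by apply: eq_bigr => i _; rewrite /bump /= !add1n addn2 !subSS.
Qed.

End Fseries.

Lemma Fser_rmorph (R R' : comUnitRingType) (phi : {rmorphism R -> R'}) (a : fps R) m N :
  Fser (phi \o a) m N = phi (Fser a m N).
Proof.
have A'E k : one_ax2 (phi \o a) k = phi (one_ax2 a k).
  by rewrite !one_ax2E rmorphD rmorph_nat; case: k => [|[|k]]; rewrite /= ?raddf0.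
have recF' : shift_rec (one_ax2 (phi \o a)) (fun m N => phi (Fser a m N)).
  move=> k M; rewrite (eq_bigr (fun i : 'I_M.+1 => phi (one_ax2 a i * Fser a k (M - i)%N))).
    rewrite -rmorph_sum -Fser_rec rmorphD rmorphM rmorph_int.
    by case: M => [|M]; rewrite ?rmorph0.
  by move=> i _; rewrite rmorphM A'E.
apply: (shift_rec_coef_eq (K := N.+1) (one_ax2_coef0 _) (fun k _ => erefl) (Fser_rec _) recF').
- exact: Fser0.
- by move=> M; rewrite Fser0 A'E.
- exact: ltnSn.
Qed.

Lemma Fser_perturb (R : comUnitRingType) (a a' : fps R) n :
  (forall i, (i < n)%N -> a i = a' i) ->
  forall m, Fser a m n.+2 = Fser a' m n.+2 + (a n - a' n) * (m + 1)%:~R.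
Proof.
move=> eq_aa'; apply: (shift_rec_coef_perturb (one_ax2_coef0 a) _ _ _ (Fser_rec a) (Fser_rec a')
  (Fser0 a) (Fser0 a')) => //.
- by case=> [|[|k]] lt_kn; rewrite !one_ax2E //= eq_aa'.
- by rewrite !one_ax2E /= !add0r addrC subrK.
Qed.

Section OddInterpolation.
Variable T : comPzRingType.
Hypothesis double_eq0 : forall x : T, x + x = 0 -> x = 0.

(* The top difference of h is a constant c, and the reflection m |-> 1 - m
   turns it into (-1)^(2d) c = c while negating h, so c = - c. *)
Lemma polyfun_odd d (h : int -> T) :
  polyfun (d.*2).+1 h -> (forall m, h (1 - m) = - h m) -> polyfun d.*2 h.
Proof.
move=> ph h_odd; set g := iter d.*2 Delta h.
have gc m : g m = g 0 by apply: Delta_eq0_const => k; exact: ph.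
have := congr1 (@^~ 0) (iter_Delta_reflect d.*2 1 h).
have -> : (fun m => h (1 - m)) = (fun m => (-1) * h m + 0 * h m).
  by apply: functional_extensionality => m; rewrite h_odd; ring.
have sgn : (-1) ^+ d.*2 = 1 :> T by rewrite -mul2n mulnC exprM sqrr_sign.
rewrite iter_Delta_lin -/g !gc sgn mul1r mul0r addr0 mulN1r.
move=> /(congr1 (fun x => g 0 + x)); rewrite subrr => /esym/double_eq0 g0 m.
by rewrite -/g (gc m).
Qed.

Definition vfun (m : int) : T := (m * (m - 1))%:~R.

Definition vpoly n (W : nat -> T) (m : int) := \sum_(i < n.+1) W i * vfun m ^+ i.

Lemma polyfun_vfunX i : polyfun (i.*2).+1 (fun m => vfun m ^+ i).
Proof.
elim: i => [|i IH]; first by apply: eq_polyfun (polyfun_const 1) => m; rewrite expr0.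
have p2 := polyfun_mulid (polyfun_mulid IH).
have p1 := polyfun_leq (leqnSn _) (polyfun_mulid IH).
by apply: eq_polyfun (polyfunB p2 p1) => m; rewrite exprS /vfun intrM intrB; ring.
Qed.

Lemma polyfun_vpoly n W : polyfun (n.*2).+1 (vpoly n W).
Proof.
apply: polyfun_sum => i _; apply/polyfunMl/(polyfun_leq _ (polyfun_vfunX i)).
by rewrite ltnS leq_double -ltnS.
Qed.

(* h - (2m - 1) vpoly is odd of degree < 2n + 2 and vanishes at 1, ..., n + 1,
   hence also at -n, ..., 0. *)
Lemma odd_interp n (h : int -> T) W :
  polyfun (n.+1.*2).+1 h -> (forall m, h (1 - m) = - h m) ->
  (forall l : nat, (0 < l <= n.+1)%N -> h l = (2 * l%:Z - 1)%:~R * vpoly n W l) ->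
  forall m, h m = (2 * m - 1)%:~R * vpoly n W m.
Proof.
move=> ph h_odd h_val.
set e := fun m => h m - (2 * m - 1)%:~R * vpoly n W m.
have pe : polyfun (n.+1.*2) e.
  apply: polyfunB; first exact: polyfun_odd.
  have p1 := polyfun_mulid (polyfun_vpoly n W).
  have p0 := polyfun_leq (leqnSn _) (polyfun_vpoly n W).
  by apply: eq_polyfun (polyfunB (polyfunMl 2 p1) p0) => m; rewrite intrB intrM; ring.
have e_odd m : e (1 - m) = - e m.
  rewrite /e h_odd /vpoly /vfun (_ : (1 - m) * (1 - m - 1) = m * (m - 1)); last by ring.
  by rewrite (_ : 2 * (1 - m) - 1 = - (2 * m - 1)) ?mulrNz; ring.
have e_val (l : nat) : (0 < l <= n.+1)%N -> e l = 0 by move=> lt_l; rewrite /e h_val ?subrr.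
move=> m; apply/eqP; rewrite -subr_eq0; apply/eqP.
apply: (polyfun_eq0 (m0 := - n%:Z) pe) => i lt_i.
case: (ltnP n i) => le_ni.
  by rewrite (_ : - n%:Z + i%:Z = (i - n)%N) ?e_val //; lia.
by rewrite (_ : - n%:Z + i%:Z = 1 - (n - i).+1%:Z) ?e_odd ?e_val ?oppr0 //; lia.
Qed.

End OddInterpolation.

Definition vnode (l : nat) : rat := (l.+1 * l)%:R.

Lemma vnode_inj : injective vnode.
Proof.
by move=> l l' /eqP; rewrite /vnode Num.Theory.eqr_nat => /eqP; nia.
Qed.

Section NodeInterpolation.
Variable U : comAlgType rat.

Definition interp_coef n (z : nat -> U) (i : nat) : U :=
  \sum_(l < n) ((tnth (lagrange n vnode) l : {poly rat})`_i)%:A * z l.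

Lemma interp_coefP n (z : nat -> U) (l0 : 'I_n) :
  \sum_(i < n) interp_coef n z i * (vnode l0)%:A ^+ i = z l0.
Proof.
have n_gt0 : (0 < n)%N by apply: leq_ltn_trans (ltn_ord l0).
have sample (l : 'I_n) : \sum_(i < n) ((tnth (lagrange n vnode) l : {poly rat})`_i)%:A
    * (vnode l0)%:A ^+ i = ((l == l0)%:R : rat)%:A.
  rewrite -(lagrange_sample n_gt0 vnode_inj).
  rewrite (horner_coef_wide _ (eq_leq (size_lagrange_ n_gt0 vnode_inj l))).
  by rewrite -!in_algE rmorph_sum; apply: eq_bigr => i _; rewrite rmorphM rmorphXn.
under eq_bigr do rewrite mulr_suml.
rewrite exchange_big (eq_bigr (fun l : 'I_n => z l * ((l == l0)%:R : rat)%:A)) => [|l _].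
  rewrite (bigD1 l0) //= eqxx mulr1n scale1r mulr1 big1 ?addr0 // => l /negbTE ->.
  by rewrite mulr0n scale0r mulr0.
by rewrite -sample mulr_sumr; apply: eq_bigr => i _; rewrite mulrAC mulrC.
Qed.

End NodeInterpolation.

Lemma lmod_rat_double_eq0 (V : lmodType rat) (x : V) : x + x = 0 -> x = 0.
Proof.
move=> /(congr1 (fun y => (2%:R : rat)^-1 *: y)).
by rewrite -mulr2n -scaler_nat scalerA mulVf // scale1r scaler0.
Qed.

Definition gen_coef (k i : nat) : {mpoly rat[k]} :=
  if insub i is Some i' then 'X_i' else 0.

(* For n = k + 1: S_i(n) interpolates m |-> Fodd m / (2m - 1) at the nodes
   v = m (m - 1) = vnode (m - 1), m = 1, ..., k + 2. *)
Definition Sgen_node (k l : nat) : {mpoly rat[k]} :=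
  ((2 * l).+1%:R^-1 : rat)%:A * Fodd (gen_coef k) k.+2 l.+1.

Definition Sgen (k : nat) : nat -> {mpoly rat[k]} := interp_coef k.+2 (Sgen_node k).

Lemma vfun_node (U : comAlgType rat) (l : nat) : @vfun U l.+1 = (vnode l)%:A.
Proof.
rewrite /vfun /vnode (_ : l.+1%:Z * (l.+1%:Z - 1) = (l.+1 * l)%N); last by lia.
by rewrite -in_algE rmorph_nat pmulrn.
Qed.

Lemma Sgen_interp k (l : nat) : (0 < l <= k.+2)%N ->
  Fodd (gen_coef k) k.+2 l = (2 * l%:Z - 1)%:~R * vpoly k.+1 (Sgen k) l.
Proof.
case: l => [|l] // /andP[_ le_l]; rewrite /vpoly.
under eq_bigr do rewrite vfun_node.
rewrite (interp_coefP _ (Ordinal le_l)) /Sgen_node /= mulrA.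
have -> : (2 * l.+1%:Z - 1)%:~R = (((2 * l).+1%:R : rat))%:A :> {mpoly rat[k]}.
  by rewrite -in_algE rmorph_nat -pmulrn; congr (_%:R); lia.
by rewrite -!in_algE -rmorphM mulfV ?rmorph1 ?mul1r // Num.Theory.pnatr_eq0.
Qed.

Lemma Fodd_gen k m :
  Fodd (gen_coef k) k.+2 m = (2 * m - 1)%:~R * vpoly k.+1 (Sgen k) m.
Proof.
exact: (odd_interp (@lmod_rat_double_eq0 _) (polyfun_Fodd _ _) (Fodd_reflect _ _)
  (@Sgen_interp k)).
Qed.

Lemma Sgen0 : Sgen 0 0 = 0 /\ Sgen 0 1 = (1 / 6 : rat)%:MP.
Proof.
have [F1 F2] := Fodd2 (gen_coef 0).
have a0 : gen_coef 0 0 = 0 by rewrite /gen_coef insubF.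
have e0 := interp_coefP (Sgen_node 0) (ord0 : 'I_2).
have e1 := interp_coefP (Sgen_node 0) (ord_max : 'I_2).
rewrite -/(Sgen 0) !big_ord_recr big_ord0 /= /Sgen_node F1 F2 a0 /vnode in e0 e1.
rewrite !muln0 !muln1 !expr0 !expr1 !mulr1 mulr0 !add0r in e0 e1.
rewrite scale0r mulr0 addr0 in e0.
rewrite big_ord0 e0 !add0r mulr0 add0r mulr1 mulr_algr in e1.
split=> //; rewrite -alg_mpolyC.
move: e1 => /(congr1 (fun y => (2%:R : rat)^-1 *: y)); rewrite scalerA mulVf // scale1r => ->.
by rewrite scalerA; congr (_ *: 1); apply/eqP.
Qed.

Lemma lemma_series_Sgen k j (R : comUnitAlgType rat) (a : nat -> R) :
  lemma_series a j.+1 k =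
  (2 * j.+1 - 1)%N%:R *
    (a k + \sum_(i < k.+2) mmap (in_alg R) (fun i : 'I_k => a i) (Sgen k i)
                           * ((j.+1 * (j.+1 - 1))%N%:R) ^+ i).
Proof.
pose phi : {rmorphism {mpoly rat[k]} -> R} := mmap (in_alg R) (fun i : 'I_k => a i).
have phi_gen i : phi (gen_coef k i) = if (i < k)%N then a i else 0.
  rewrite /gen_coef; case: insubP => [i' _ <-|/negbTE ->]; last exact: raddf0.
  by rewrite ltn_ord /= mmapX mmap1U.
have Fa m : Fser a m k.+2 = phi (Fser (gen_coef k) m k.+2) + a k * (m + 1)%:~R.
  rewrite -Fser_rmorph (Fser_perturb (a' := phi \o gen_coef k)) => [|i lt_ik];
    by rewrite /comp phi_gen ?ltnn ?subr0 ?lt_ik.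
have phi_v : phi (vfun _ j.+1) = (j.+1 * (j.+1 - 1))%N%:R.
  by rewrite rmorph_int -pmulrn; f_equal; lia.
rewrite (lemma_seriesE a) /Fodd !Fa opprD addrACA -rmorphB -/(Fodd _ _ _) Fodd_gen.
rewrite rmorphM rmorph_int /vpoly rmorph_sum -mulrBr -intrB.
under eq_bigr do rewrite rmorphM rmorphXn phi_v.
rewrite (_ : (2 * j.+1 - 1)%N = (2 * j).+1); last by lia.
ring.
Qed.

Theorem lemma2p2 :
  exists S : forall n : nat, nat -> {mpoly rat[n.-1]},
    [/\ S 1%N 0%N = 0,
        S 1%N 1%N = (1 / 6 : rat)%:MP &
        forall (n j : nat), (0 < n)%N -> (0 < j)%N ->
        forall (R : comUnitAlgType rat) (a : nat -> R),
          lemma_series a j n.-1 =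
          (2 * j - 1)%N%:R *
            (a n.-1 + \sum_(i < n.+1)
                 mmap (in_alg R) (fun k : 'I_n.-1 => a (nat_of_ord k)) (S n i)
                 * ((j * (j - 1))%N%:R) ^+ i)].
Proof.
exists (fun n => Sgen n.-1); have [S0 S1] := Sgen0; split=> // -[|k] [|j] // _ _ R a.
exact: lemma_series_Sgen.
Qed.
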